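(* Let $k-1\le r\le 2k-2$ and suppose the $x$-direction parameters $(\alpha^x_s)_{s=1}^k$, $(a^x_s)_{s=0}^k$ satisfy the one-dimensional $k$-$r$-order orthogonality condition. Put $A^x_s=a^x_s-a^x_{s-1}$, $s=1,\dots,k$. Then the $k$-point quadrature rule with nodes $\alpha^x_1,\dots,\alpha^x_k$ and weights $A^x_1,\dots,A^x_k$ is exact on $P^{r+1}([-1,1])$: $$\int_{-1}^1 g(x)\,dx=\sum_{s=1}^k A^x_s\,g(\alpha^x_s)\qquad\forall g\in P^{r+1}([-1,1]).$$ The same holds in the $y$-direction with $A^y_t=a^y_t-a^y_{t-1}$ and nodes $\alpha^y_t$ when the $y$-direction parameters satisfy the condition.
   Context: $k\ge1$ an integer, $P^m([-1,1])$ the polynomials of degree $\le m$. Dual parameters $-1<\alpha^x_1<\dots<\alpha^x_k<1$; interpolation parameters $-1=a^x_0<a^x_1<\dots<a^x_k=1$ with $a^x_{s-1}<\alpha^x_s<a^x_s$; put $\alpha^x_0=-1$, $\alpha^x_{k+1}=1$ (analogously in $y$). For $k-1\le r\le 2k-2$, the $x$-direction parameters satisfy the one-dimensional $k$-$r$-order orthogonality condition if $\int_{-1}^1 g(\hat x)\big(w(\hat x)-(\hat\Pi_xw)(\hat x)\big)d\hat x=0$ for all $g\in P^r([-1,1])$ and all $w\in P^1([-1,1])$, where $(\hat\Pi_xw)(\hat x)=w(a^x_s)$ for $\hat x\in(\alpha^x_s,\alpha^x_{s+1})$, $0\le s\le k$. *)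

From Stdlib Require Import Reals.
From Coquelicot Require Import Coquelicot.
Open Scope R_scope.

Definition is_poly_le (m : nat) (g : R -> R) : Prop :=
  exists c : nat -> R, forall x, g x = sum_f_R0 (fun i => c i * x ^ i) m.

Definition alphaE (k : nat) (alpha : nat -> R) (s : nat) : R :=
  if Nat.eqb s 0 then -1 else if Nat.eqb s (S k) then 1 else alpha s.

(* Piecewise constant interpolation: (Pi w)(x) = w(a_s) for
   x in [alpha_s, alpha_{s+1}), 0 <= s <= k (value on the finitely many
   breakpoints is irrelevant for integrals). *)
Definition Pi_interp (k : nat) (alpha a : nat -> R) (w : R -> R) (x : R) : R :=
  sum_f_R0 (fun s =>
    if Rle_dec (alphaE k alpha s) x then
      if Rlt_dec x (alphaE k alpha (S s)) then w (a s) else 0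
    else 0) k.

Definition admissible_params (k : nat) (alpha a : nat -> R) : Prop :=
  a 0%nat = -1 /\ a k = 1 /\
  (forall s, (s < k)%nat -> a s < a (S s)) /\
  (forall s, (1 <= s <= k)%nat -> a (pred s) < alpha s < a s).

Definition orth_condition (k r : nat) (alpha a : nat -> R) : Prop :=
  forall g w : R -> R, is_poly_le r g -> is_poly_le 1 w ->
    RInt (fun x => g x * (w x - Pi_interp k alpha a w x)) (-1) 1 = 0.

From Stdlib Require Import Reals Lra Lia.
From Coquelicot Require Import Coquelicot.
Open Scope R_scope.

(* Test the orthogonality condition with [w x = x] and [g'] in place of [g].
   On the piece [alpha_s, alpha_(s+1)] the interpolant of [x] is the constant
   [a_s], and [x -> g x * (x - a_s)] is a primitive of [g' x * (x - a_s) + g x].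
   Summing over the pieces, the vanishing integral of [g' (x - Pi x)] leaves
   [int g] equal to a telescoping sum of boundary terms; since [a_0 = -1] and
   [a_k = 1] the outer terms vanish and the inner ones regroup into
   [sum_s (a_s - a_(s-1)) g(alpha_s)]. *)

Lemma is_derive_sum_pow (c : nat -> R) (n : nat) (x : R) :
  is_derive (fun y => sum_f_R0 (fun i => c i * y ^ i) n) x
            (sum_f_R0 (fun i => c i * (INR i * x ^ pred i)) n).
Proof.
  induction n as [|n IH]; cbn [sum_f_R0].
  - auto_derive; [easy | simpl; ring].
  - apply (is_derive_plus (fun y => sum_f_R0 (fun i => c i * y ^ i) n)
                          (fun y => c (S n) * y ^ S n)); [exact IH|].
    apply is_derive_scal.
    replace (INR (S n) * x ^ pred (S n)) with (INR (S n) * 1 * x ^ pred (S n)) by ring.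
    exact (is_derive_pow (fun t => t) (S n) x 1 (is_derive_id x)).
Qed.

Lemma is_poly_le_continuous (m : nat) (g : R -> R) :
  is_poly_le m g -> forall x, continuous g x.
Proof.
  intros [c Hc] x.
  apply (continuous_ext (fun y => sum_f_R0 (fun i => c i * y ^ i) m)).
  - intros y; symmetry; apply Hc.
  - apply (ex_derive_continuous (fun y => sum_f_R0 (fun i => c i * y ^ i) m)).
    eexists; apply is_derive_sum_pow.
Qed.

Lemma is_poly_le_derive (m : nat) (g : R -> R) :
  is_poly_le (S m) g ->
  exists dg, is_poly_le m dg /\ forall x, is_derive g x (dg x).
Proof.
  intros [c Hc].
  exists (fun x => sum_f_R0 (fun i => c (S i) * INR (S i) * x ^ i) m); split.
  - exists (fun i => c (S i) * INR (S i)); reflexivity.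
  - intros x.
    apply (is_derive_ext (fun y => sum_f_R0 (fun i => c i * y ^ i) (S m))).
    { intros y; symmetry; apply Hc. }
    replace (sum_f_R0 _ m)
      with (sum_f_R0 (fun i => c i * (INR i * x ^ pred i)) (S m)).
    { apply is_derive_sum_pow. }
    rewrite decomp_sum by lia; simpl pred.
    rewrite Rmult_0_l, Rmult_0_r, Rplus_0_l.
    apply sum_eq; intros i _; simpl pred; ring.
Qed.

Lemma is_poly_le_id : is_poly_le 1 (fun x => x).
Proof. exists (fun i => if Nat.eqb i 1 then 1 else 0); intros x; simpl; ring. Qed.

Lemma is_derive_mult_shift (g : R -> R) (dg c x : R) :
  is_derive g x dg -> is_derive (fun y => g y * (y - c)) x (dg * (x - c) + g x).
Proof.
  intros Hg.
  assert (Hshift : is_derive (fun y => y - c) x 1) by (auto_derive; [easy | ring]).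
  replace (dg * (x - c) + g x) with (dg * (x - c) + g x * 1) by ring.
  exact (is_derive_mult g (fun y => y - c) x dg 1 Hg Hshift Rmult_comm).
Qed.

Lemma sum_f_R0_single (f : nat -> R) (n s : nat) :
  (s <= n)%nat -> (forall t, (t <= n)%nat -> t <> s -> f t = 0) ->
  sum_f_R0 f n = f s.
Proof.
  induction n as [|n IH]; intros Hs Hz; simpl.
  - replace s with 0%nat by lia; reflexivity.
  - destruct (Nat.eq_dec s (S n)) as [->|Hne].
    + rewrite (sum_eq _ (fun _ => 0)), sum_cte by (intros; apply Hz; lia); ring.
    + rewrite IH, (Hz (S n)) by (try lia; intros; apply Hz; lia); ring.
Qed.

Lemma sum_f_R0_telescope_shift (h : nat -> R -> R) (b : nat -> R) (n : nat) :
  (1 <= n)%nat ->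
  sum_f_R0 (fun s => h s (b (S s)) - h s (b s)) n =
  h n (b (S n)) - h 0%nat (b 0%nat)
  + sum_f_R0 (fun s => h s (b (S s)) - h (S s) (b (S s))) (n - 1).
Proof.
  intros Hn; induction n as [|[|n] IH]; [lia | simpl; ring |].
  rewrite tech5, IH by lia; replace (S (S n) - 1)%nat with (S (S n - 1)) by lia.
  rewrite tech5; replace (S (S n - 1)) with (S n) by lia; ring.
Qed.

Lemma is_RInt_Chasles_sum (f : R -> R) (b v : nat -> R) (n : nat) :
  (forall s, (s <= n)%nat -> is_RInt f (b s) (b (S s)) (v s)) ->
  is_RInt f (b 0%nat) (b (S n)) (sum_f_R0 v n).
Proof.
  induction n as [|n IH]; intros H; simpl; [apply H; lia|].
  apply (is_RInt_Chasles f _ (b (S n))); [apply IH; intros s Hs|]; apply H; lia.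
Qed.

Section Partition.

Variables (k : nat) (alpha a : nat -> R).
Hypothesis k_ge1 : (1 <= k)%nat.
Hypothesis adm : admissible_params k alpha a.

Lemma alphaE_interior s : (1 <= s <= k)%nat -> alphaE k alpha s = alpha s.
Proof.
  intros Hs; unfold alphaE.
  destruct (Nat.eqb_spec s 0), (Nat.eqb_spec s (S k)); [lia..|reflexivity].
Qed.

Lemma alphaE_last : alphaE k alpha (S k) = 1.
Proof. unfold alphaE; simpl; rewrite Nat.eqb_refl; reflexivity. Qed.

Lemma alphaE_lt_succ i : (i <= k)%nat -> alphaE k alpha i < alphaE k alpha (S i).
Proof.
  intros Hi; destruct adm as (Ha0 & Hak & _ & Hal).
  destruct i as [|i].
  - rewrite (alphaE_interior 1) by lia.
    specialize (Hal 1%nat ltac:(lia)); change (alphaE k alpha 0) with (-1); simpl in *; lra.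
  - rewrite (alphaE_interior (S i)) by lia.
    destruct (Nat.eq_dec (S i) k) as [E|Hne].
    + rewrite E, alphaE_last; specialize (Hal k ltac:(lia)); lra.
    + rewrite alphaE_interior by lia.
      pose proof (Hal (S i) ltac:(lia)); pose proof (Hal (S (S i)) ltac:(lia)).
      simpl in *; lra.
Qed.

Lemma alphaE_le s t : (s <= t <= S k)%nat -> alphaE k alpha s <= alphaE k alpha t.
Proof.
  induction t as [|t IH]; intros H.
  - replace s with 0%nat by lia; lra.
  - destruct (Nat.eq_dec s (S t)) as [->|]; [lra|].
    pose proof (alphaE_lt_succ t ltac:(lia)); specialize (IH ltac:(lia)); lra.
Qed.

Lemma Pi_interp_id_piece s x :
  (s <= k)%nat -> alphaE k alpha s < x < alphaE k alpha (S s) ->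
  Pi_interp k alpha a (fun y => y) x = a s.
Proof.
  intros Hs Hx; unfold Pi_interp.
  rewrite (sum_f_R0_single _ k s Hs).
  - destruct (Rle_dec _ x); [|lra]; destruct (Rlt_dec x _); [reflexivity|lra].
  - intros t Ht Hne.
    destruct (Rle_dec _ x); [|reflexivity]; destruct (Rlt_dec x _); [|reflexivity].
    exfalso; destruct (Nat.lt_ge_cases t s).
    + pose proof (alphaE_le (S t) s ltac:(lia)); lra.
    + pose proof (alphaE_le (S s) t ltac:(lia)); lra.
Qed.

Lemma is_RInt_interp_defect (g dg : R -> R) :
  (forall x, is_derive g x (dg x)) -> (forall x, continuous dg x) ->
  is_RInt (fun x => dg x * (x - Pi_interp k alpha a (fun y => y) x) + g x) (-1) 1
          (sum_f_R0 (fun i => (a (S i) - a i) * g (alpha (S i))) (k - 1)).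
Proof.
  intros Hg Hdg.
  set (h s x := g x * (x - a s)).
  assert (Hpiece : forall s, (s <= k)%nat ->
    is_RInt (fun x => dg x * (x - Pi_interp k alpha a (fun y => y) x) + g x)
      (alphaE k alpha s) (alphaE k alpha (S s))
      (h s (alphaE k alpha (S s)) - h s (alphaE k alpha s))).
  { intros s Hs; pose proof (alphaE_lt_succ s Hs).
    apply (is_RInt_ext (fun x => dg x * (x - a s) + g x)).
    { intros x Hx; rewrite Rmin_left, Rmax_right in Hx by lra.
      rewrite (Pi_interp_id_piece s x Hs Hx); reflexivity. }
    apply (is_RInt_derive (h s)); intros x _.
    - apply is_derive_mult_shift, Hg.
    - apply (continuous_plus (fun y => dg y * (y - a s)) g).
      + apply (continuous_mult dg (fun y => y - a s)); [apply Hdg|].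
        apply (continuous_minus (fun y => y) (fun _ => a s));
          [apply continuous_id | apply continuous_const].
      + apply (ex_derive_continuous g); eexists; apply Hg. }
  pose proof (is_RInt_Chasles_sum _ _ _ k Hpiece) as Hsum.
  rewrite alphaE_last in Hsum; change (alphaE k alpha 0) with (-1) in Hsum.
  match goal with |- is_RInt _ _ _ ?v => replace v with (sum_f_R0 (fun s =>
    h s (alphaE k alpha (S s)) - h s (alphaE k alpha s)) k) end.
  { exact Hsum. }
  destruct adm as (Ha0 & Hak & _ & _).
  rewrite sum_f_R0_telescope_shift, alphaE_last by exact k_ge1.
  change (alphaE k alpha 0) with (-1); unfold h; rewrite Ha0, Hak.
  transitivity (sum_f_R0 (fun s => g (alphaE k alpha (S s)) * (a (S s) - a s)) (k - 1)).
  - rewrite !Rminus_diag, !Rmult_0_r, Rminus_diag, Rplus_0_l.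
    apply sum_eq; intros; ring.
  - apply sum_eq; intros i Hi; rewrite alphaE_interior by lia; ring.
Qed.

End Partition.

Theorem mainTheorem2 (k r : nat) (alpha a : nat -> R) :
  (1 <= k)%nat ->
  (k - 1 <= r <= 2 * k - 2)%nat ->
  admissible_params k alpha a ->
  orth_condition k r alpha a ->
  forall g : R -> R, is_poly_le (S r) g ->
    RInt g (-1) 1 =
    sum_f_R0 (fun i => (a (S i) - a i) * g (alpha (S i))) (k - 1).
Proof.
  intros Hk _ Hadm Horth g Hg.
  destruct (is_poly_le_derive r g Hg) as (dg & Hdg & Hgd).
  set (defect x := dg x * (x - Pi_interp k alpha a (fun y => y) x)).
  assert (Hdefect0 : RInt defect (-1) 1 = 0)
    by exact (Horth dg (fun y => y) Hdg is_poly_le_id).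
  pose proof (is_RInt_interp_defect k alpha a Hk Hadm g dg Hgd
                (is_poly_le_continuous r dg Hdg)) as Hsum.
  assert (Hint_g : ex_RInt g (-1) 1).
  { apply (ex_RInt_continuous (V := R_CompleteNormedModule)); intros x _.
    exact (is_poly_le_continuous (S r) g Hg x). }
  assert (Hdefect : is_RInt defect (-1) 1
            (sum_f_R0 (fun i => (a (S i) - a i) * g (alpha (S i))) (k - 1) - RInt g (-1) 1)).
  { apply (is_RInt_ext (fun x => (defect x + g x) - g x));
      [intros x _; apply Rplus_minus_r|].
    exact (is_RInt_minus _ _ _ _ _ _ Hsum
             (RInt_correct (V := R_CompleteNormedModule) g _ _ Hint_g)). }
  rewrite (is_RInt_unique _ _ _ _ Hdefect) in Hdefect0; lra.
Qed.
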